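(* Let $n\ge 2$, $N=2^n$, $s=(N-1)/2$. Consider the restricted close Hadamard problem: given oracle access (via $\hat U_z$) to a string $z\in\tilde C=\tilde A\cup\tilde B$, where $\tilde A=\tilde\Xi^{(N)}_{N/2-1}$ and $\tilde B=\bigcup_{k=0}^{N/2-2}\tilde\Xi^{(N)}_k$, decide whether $z\in\tilde A$ or $z\in\tilde B$. There is a quantum algorithm that solves this problem with certainty (for every $z\in\tilde C$) using a single query to $\hat U_z$: it prepares the state $\tfrac1{\sqrt2}(|\tfrac12\rangle_s+|-\tfrac12\rangle_s)$, applies $\hat H^{\otimes n}$, then $\hat U_z$, then $\hat H^{\otimes n}$, then a fixed unitary not depending on $z$, and then measures in the spin basis.
   Context: Work in $\mathbb{C}^N$ with computational basis $\{|y\rangle : y=0,\dots,N-1\}$; spin basis states $|m\rangle_s$, $m\in\{-s,\dots,s\}$, are identified via $|m\rangle_s=|m+s\rangle$. For $x,y\in\{0,\dots,N-1\}$, $x\cdot y\in\{0,1\}$ is the mod-2 inner product of their $n$-bit binary expansions; $\hat H^{\otimes n}|y\rangle=N^{-1/2}\sum_x(-1)^{x\cdot y}|x\rangle$. The Hadamard codeword $W^{(N)}_j\in\{0,1\}^N$ has bit $x\cdot j$ at position $x$. For $z\in\{0,1\}^N$ the oracle is the diagonal unitary $\hat U_z|x\rangle=(-1)^{z_x}|x\rangle$; a query is one application of $\hat U_z$. For $a,b\in\{0,1\}^N$, $a\preccurlyeq b$ means $a_x=1\Rightarrow b_x=1$. The set $\tilde\Xi^{(N)}_j$ consists of all strings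 $W^{(N)}_j\oplus e$ with $e\preccurlyeq W^{(N)}_{N-1}$ and Hamming weight $|e|<N/4$ ($\oplus$ is bitwise XOR). *)

From HB Require Import structures.
From mathcomp Require Import all_boot all_order all_algebra all_field.
Set Implicit Arguments. Unset Strict Implicit. Unset Printing Implicit Defensive.
Import Order.TTheory GRing.Theory Num.Theory.
Local Open Scope ring_scope.

Definition bitdot (n x y : nat) : bool :=
  odd (\sum_(i < n) (odd (x %/ 2 ^ i) && odd (y %/ 2 ^ i)))%N.

Definition bstr (n : nat) := {ffun 'I_(2 ^ n) -> bool}.

Definition codeword (n j : nat) : bstr n := [ffun x : 'I_(2 ^ n) => bitdot n x j].

Definition bxor n (a b : bstr n) : bstr n := [ffun x => a x (+) b x].
Definition bprec n (a b : bstr n) : bool := [forall x, a x ==> b x].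
Definition hweight n (a : bstr n) : nat := #|[set x | a x]|.

(* tilde Xi^(N)_j : W_j xor e, e below W_{N-1}, |e| < N/4 *)
Definition Xi (n j : nat) (z : bstr n) : bool :=
  [exists e : bstr n, [&& bprec e (codeword n (2 ^ n).-1),
                          (4 * hweight e < 2 ^ n)%N &
                          z == bxor (codeword n j) e]].

Definition inA n (z : bstr n) : bool := @Xi n (2 ^ n %/ 2).-1 z.
Definition inB n (z : bstr n) : bool :=
  [exists k : 'I_((2 ^ n %/ 2).-1), @Xi n k z].

Definition hadamard (n : nat) : 'M[algC]_(2 ^ n) :=
  \matrix_(x < 2 ^ n, y < 2 ^ n) ((-1) ^+ bitdot n x y / sqrtC (2 ^ n)%:R).

Definition oracle n (z : bstr n) : 'M[algC]_(2 ^ n) :=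
  diag_mx (\row_x ((-1) ^+ z x)).

(* (|1/2>_s + |-1/2>_s)/sqrt 2 with |m>_s = |m+s>, s=(N-1)/2,
   i.e. (|N/2> + |N/2 - 1>)/sqrt 2 *)
Definition psi0 (n : nat) : 'cV[algC]_(2 ^ n) :=
  \col_(y < 2 ^ n)
    (if (val y == 2 ^ n %/ 2)%N || (val y == (2 ^ n %/ 2).-1)%N
     then (sqrtC 2)^-1 else 0).

Definition unitary n (V : 'M[algC]_n) : Prop :=
  V *m (map_mx Num.conj V)^T = 1%:M.

Definition final_state n (V : 'M[algC]_(2 ^ n)) (z : bstr n) : 'cV[algC]_(2 ^ n) :=
  V *m (hadamard n *m (oracle z *m (hadamard n *m psi0 n))).

Definition prob_in n (V : 'M[algC]_(2 ^ n)) (z : bstr n) (S : {set 'I_(2 ^ n)}) : algC :=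
  \sum_(y in S) `|final_state V z y 0| ^+ 2.

From HB Require Import structures.
From mathcomp Require Import all_boot all_order all_algebra all_field.
From mathcomp Require Import zify ring.
Import Order.TTheory GRing.Theory Num.Theory.
Local Open Scope ring_scope.

(* Write a = N/2 and b = N/2 - 1, whose bits are complementary, so that
   x.a + x.b = x.(N-1) mod 2. After the first Hadamard transform the amplitude
   of |x> is proportional to (-1)^(x.a) + (-1)^(x.b), which vanishes exactly
   where x.(N-1) = 1; since the error e of z = W_j xor e lives there, the
   oracle acts as U_(W_j). By orthogonality of the characters (-1)^(x.y), the
   second Hadamard transform then yields (|a xor j> + |b xor j>)/sqrt 2. For
   j = b this is (|0> + |N-1>)/sqrt 2, while for j < b neither a xor j nor
   b xor j is 0 or N-1. So the identity as final unitary, followed by the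
   measurement of the outcomes {0, N-1}, decides the problem with certainty. *)

Definition bit (x i : nat) : bool := odd (x %/ 2 ^ i).

Lemma bit0n i : bit 0 i = false.
Proof. by rewrite /bit div0n. Qed.

Lemma bit_lsb q r : bit (q * 2 + r) 0 = odd r.
Proof. by rewrite /bit expn0 divn1 oddD oddM andbF. Qed.

Lemma bitS q r i : (r < 2)%N -> bit (q * 2 + r) i.+1 = bit q i.
Proof.
by move=> lt_r2; rewrite /bit expnS divnMA divnMDl // (divn_small lt_r2) addn0.
Qed.

Lemma bit_exp2 k i : bit (2 ^ k) i = (i == k).
Proof.
elim: k i => [|k IHk] [|i] //.
- by rewrite expn0 -[1%N]/(0 * 2 + 1)%N bitS // bit0n.
- by rewrite expnSr -[(_ * 2)%N]addn0 bit_lsb.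
- by rewrite expnSr -[(_ * 2)%N]addn0 bitS // IHk.
Qed.

Lemma bit_exp2_pred k i : bit (2 ^ k).-1 i = (i < k)%N.
Proof.
have expE j : (2 ^ j.+1).-1 = ((2 ^ j).-1 * 2 + 1)%N.
  by have := expn_gt0 2 j; rewrite expnSr; lia.
elim: k i => [|k IHk] [|i] //; rewrite ?bit0n // expE.
- by rewrite bit_lsb.
- by rewrite bitS // IHk.
Qed.

Lemma bit_inj k x y : (x < 2 ^ k)%N -> (y < 2 ^ k)%N ->
  (forall i, (i < k)%N -> bit x i = bit y i) -> x = y.
Proof.
elim: k x y => [|k IHk] x y; first by rewrite !ltnS !leqn0 => /eqP-> /eqP->.
move=> lt_x lt_y eq_bits.
rewrite (divn_eq x 2) (divn_eq y 2) in eq_bits *.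
have lt_half z : (z < 2 ^ k.+1)%N -> (z %/ 2 < 2 ^ k)%N.
  by move=> lt_z; rewrite ltn_divLR // -expnSr.
have := eq_bits 0%N isT; rewrite !bit_lsb !modn2 !oddb => ->.
congr (_ * _ + _)%N; apply: IHk; rewrite ?lt_half // => i lt_ik.
by have := eq_bits i.+1 lt_ik; rewrite !bitS ?ltn_mod.
Qed.

Lemma bit_complement k c i : (c < 2 ^ k)%N -> (i < k)%N ->
  bit ((2 ^ k).-1 - c) i = ~~ bit c i.
Proof.
elim: k c i => [|k IHk] c i // lt_c lt_i.
have lt_q : (c %/ 2 < 2 ^ k)%N by rewrite ltn_divLR // -expnSr.
have lt_r := ltn_pmod c (isT : 0 < 2)%N.
have -> : ((2 ^ k.+1).-1 - c = ((2 ^ k).-1 - c %/ 2) * 2 + (1 - c %% 2))%N.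
  rewrite {2}(divn_eq c 2) expnSr; lia.
rewrite [in RHS](divn_eq c 2); case: i lt_i => [|i] lt_i.
  by rewrite !bit_lsb oddB // modn2; case: (odd c).
by rewrite !bitS ?IHk //; lia.
Qed.

Lemma big_nat_pairs (R : nmodType) (F : nat -> R) m :
  \sum_(0 <= x < m * 2) F x = \sum_(0 <= q < m) (F (q * 2)%N + F (q * 2).+1).
Proof.
elim: m => [|m IHm]; first by rewrite !big_geq.
by rewrite mulSn addnC (addnS _ 1) addn1 !big_nat_recr //= IHm addrA.
Qed.

Lemma sum_sign_bits_prod (R : pzRingType) n (f : nat -> nat) :
  \sum_(0 <= x < 2 ^ n) (-1) ^+ (\sum_(0 <= i < n) bit x i * f i)%N
  = \prod_(0 <= i < n) (1 + (-1) ^+ f i) :> R.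
Proof.
elim: n f => [|n IHn] f; first by rewrite expn0 big_nat1 !big_geq.
rewrite expnSr big_nat_pairs big_nat_recl // -IHn mulr_sumr.
apply: eq_bigr => q _.
have split_lsb r : (r < 2)%N -> (\sum_(0 <= i < n.+1) bit (q * 2 + r) i * f i =
    odd r * f 0 + \sum_(0 <= i < n) bit q i * f i.+1)%N.
  move=> lt_r2; rewrite big_nat_recl // bit_lsb; congr (_ + _)%N.
  by apply: eq_bigr => i _; rewrite bitS.
have := split_lsb 0%N isT; have := split_lsb 1%N isT.
rewrite addn0 addn1 => -> ->.
by rewrite /= mul0n add0n mul1n exprD mulrDl mul1r.
Qed.

Lemma sum_sign_bits (R : comPzRingType) n (f : nat -> nat) :
  \sum_(0 <= x < 2 ^ n) (-1) ^+ (\sum_(0 <= i < n) bit x i * f i)%N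
  = (2 ^ n)%:R * [forall i : 'I_n, ~~ odd (f i)]%:R :> R.
Proof.
rewrite sum_sign_bits_prod.
case: forallP => [even_f | /forallP/forallPn[i odd_fi]].
  rewrite mulr1 natrX -[in RHS](subn0 n) -prodr_const_nat.
  apply: eq_big_nat => i /andP[_ lt_i].
  by rewrite -signr_odd (negbTE (even_f (Ordinal lt_i))).
rewrite negbK in odd_fi.
by rewrite mulr0 big_mkord (bigD1 (i : 'I_n)) //= -signr_odd odd_fi addrN mul0r.
Qed.

Lemma bitdotC n x y : bitdot n x y = bitdot n y x.
Proof. by congr odd; apply: eq_bigr => i _; rewrite andbC. Qed.

Lemma sign_bitdot (R : pzRingType) n x y :
  (-1) ^+ bitdot n x y = (-1) ^+ (\sum_(0 <= i < n) bit x i * bit y i)%N :> R.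
Proof.
rewrite signr_odd big_mkord; congr (_ ^+ _).
by apply: eq_bigr => i _; rewrite mulnb.
Qed.

Definition xor3_zero n (u v w : nat) : bool :=
  [forall i : 'I_n, ~~ (bit u i (+) bit v i (+) bit w i)].

Lemma sum_sign_bitdot3 (R : comPzRingType) n y j c :
  \sum_(x < 2 ^ n)
     ((-1) ^+ bitdot n y x * (-1) ^+ bitdot n x j * (-1) ^+ bitdot n x c)
  = (2 ^ n)%:R * (xor3_zero n y j c)%:R :> R.
Proof.
have -> : xor3_zero n y j c =
          [forall i : 'I_n, ~~ odd (bit y i + bit j i + bit c i)].
  by apply: eq_forallb => i; rewrite !oddD !oddb.
rewrite -(sum_sign_bits R n (fun i => bit y i + bit j i + bit c i)%N).
rewrite big_mkord; apply: eq_bigr => x _.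
rewrite bitdotC !sign_bitdot -!exprD -!big_split /=.
by congr (_ ^+ _); apply: eq_bigr => i _; rewrite !mulnDr mulnC.
Qed.

Lemma xor3_zero0 n j c : (j < 2 ^ n)%N -> (c < 2 ^ n)%N ->
  xor3_zero n 0 j c = (j == c).
Proof.
move=> lt_j lt_c; apply/forallP/eqP => [eq_bits | <- i]; last first.
  by rewrite bit0n addbb.
apply: bit_inj lt_j lt_c _ => i lt_i.
have := eq_bits (Ordinal lt_i); rewrite bit0n.
by case: (bit j i); case: (bit c i).
Qed.

Lemma xor3_zero_ones n j c : (j < 2 ^ n)%N -> (c < 2 ^ n)%N ->
  xor3_zero n (2 ^ n).-1 j c = (j == (2 ^ n).-1 - c)%N.
Proof.
move=> lt_j lt_c; have lt_c' : ((2 ^ n).-1 - c < 2 ^ n)%N.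
  by have := expn_gt0 2 n; lia.
apply/forallP/eqP => [eq_bits | -> i]; last first.
  by rewrite bit_exp2_pred ltn_ord bit_complement //; case: (bit c i).
apply: bit_inj lt_j lt_c' _ => i lt_i.
have := eq_bits (Ordinal lt_i); rewrite bit_exp2_pred lt_i bit_complement //.
by case: (bit j i); case: (bit c i).
Qed.

Lemma exp2_pred_lt k : ((2 ^ k).-1 < 2 ^ k)%N.
Proof. by rewrite ltn_predL expn_gt0. Qed.

(* The spin states |-s>_s and |s>_s, i.e. |0> and |N-1>. *)
Definition extreme_outcomes k : {set 'I_(2 ^ k)} :=
  [set Ordinal (leq_ltn_trans (leq0n _) (exp2_pred_lt k));
       Ordinal (exp2_pred_lt k)].

Lemma unitary1 k : unitary (1%:M : 'M[algC]_k).
Proof.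
by apply/matrixP => i j; rewrite /unitary mul1mx !mxE conjC_nat eq_sym.
Qed.

Lemma oracle_bxor_on_kernel n (w e : bstr n) (v : 'cV[algC]_(2 ^ n)) :
  (forall x, e x -> v x 0 = 0) -> oracle (bxor w e) *m v = oracle w *m v.
Proof.
move=> v_e; apply/matrixP => x k; rewrite !mul_diag_mx !mxE ffunE (ord1 k).
case e_x: (e x); last by rewrite addbF.
by rewrite v_e ?e_x ?mulr0.
Qed.

Section OneQueryAlgorithm.

Variable m : nat.
Local Notation n := m.+1.
Local Notation a := (2 ^ n %/ 2)%N.
Local Notation b := (2 ^ n %/ 2).-1.

Lemma half_exp2S : a = (2 ^ m)%N.
Proof. by rewrite expnS mulKn. Qed.

Lemma half_exp2S_lt : (a < 2 ^ n)%N.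
Proof. by rewrite half_exp2S ltn_exp2l. Qed.

Lemma half_exp2S_pred_lt : (b < a)%N.
Proof. by rewrite half_exp2S exp2_pred_lt. Qed.

Lemma complement_half_exp2S : ((2 ^ n).-1 - a = b)%N /\ ((2 ^ n).-1 - b = a)%N.
Proof. by rewrite half_exp2S expnS; have := expn_gt0 2 m; lia. Qed.

Lemma bitdot_ones x : bitdot n x (2 ^ n).-1 = bitdot n x a (+) bitdot n x b.
Proof.
rewrite /bitdot -oddD -big_split /=; congr odd; apply: eq_bigr => i _.
rewrite -!/(bit _ _) half_exp2S bit_exp2 !bit_exp2_pred ltn_ord.
case: (bit x i) => //=; move: (ltn_ord i); rewrite ltnS leq_eqVlt.
by case/predU1P => [-> | lt_im]; rewrite ?eqxx ?ltnn // lt_im ltn_eqF.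
Qed.

Lemma hadamard_psi0E (x : 'I_(2 ^ n)) : (hadamard n *m psi0 n) x 0 =
  ((-1) ^+ bitdot n x a + (-1) ^+ bitdot n x b) / (sqrtC (2 ^ n)%:R * sqrtC 2).
Proof.
have lt_b := ltn_trans half_exp2S_pred_lt half_exp2S_lt.
rewrite mxE (bigD1 (Ordinal half_exp2S_lt)) //= (bigD1 (Ordinal lt_b)) /=.
  2: by rewrite -val_eqE /= ltn_eqF ?half_exp2S_pred_lt.
rewrite big1 => [|y /andP[y_a y_b]]; last first.
  rewrite !mxE -!val_eqE /= in y_a y_b *.
  by rewrite (negbTE y_a) (negbTE y_b) mulr0.
by rewrite !mxE /= !eqxx ?orbT /= addr0 invfM; ring.
Qed.

Lemma hadamard_psi0_vanishes (x : 'I_(2 ^ n)) :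
  bitdot n x (2 ^ n).-1 -> (hadamard n *m psi0 n) x 0 = 0.
Proof.
rewrite hadamard_psi0E bitdot_ones.
case: (bitdot n x a); case: (bitdot n x b) => //= _;
  by rewrite ?addrN ?addNr mul0r.
Qed.

Lemma final_state_bxor_error V j (e : bstr n) :
  bprec e (codeword n (2 ^ n).-1) ->
  final_state V (bxor (codeword n j) e) = final_state V (codeword n j).
Proof.
move=> /forallP e_le; rewrite /final_state oracle_bxor_on_kernel // => x e_x.
by apply: hadamard_psi0_vanishes; move: (implyP (e_le x) e_x); rewrite ffunE.
Qed.

Lemma final_state_codeword j (y : 'I_(2 ^ n)) :
  final_state 1%:M (codeword n j) y 0 =
  (sqrtC 2)^-1 * ((xor3_zero n y j a)%:R + (xor3_zero n y j b)%:R).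
Proof.
set r : algC := sqrtC (2 ^ n)%:R.
have r2 : r * r = (2 ^ n)%:R by rewrite -expr2 sqrtCK.
have s2_neq0 : sqrtC 2 != 0 :> algC by rewrite sqrtC_eq0 pnatr_eq0.
rewrite /final_state mul1mx mxE.
under eq_bigr => x _ do rewrite mul_diag_mx mxE hadamard_psi0E !mxE ffunE.
transitivity (\sum_(x < 2 ^ n)
   ((-1) ^+ bitdot n y x * (-1) ^+ bitdot n x j * (-1) ^+ bitdot n x a +
    (-1) ^+ bitdot n y x * (-1) ^+ bitdot n x j * (-1) ^+ bitdot n x b)
   * (r^-1 * (r * sqrtC 2)^-1)).
  by apply: eq_bigr => x _; rewrite -/r; ring.
rewrite -mulr_suml big_split /= !sum_sign_bitdot3 -r2.
have r_neq0 : r != 0 by rewrite sqrtC_eq0 pnatr_eq0 -lt0n expn_gt0.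
by field; rewrite s2_neq0 r_neq0.
Qed.

Lemma final_state_codeword_extreme j y : (j < 2 ^ n)%N ->
  y \in extreme_outcomes n ->
  final_state 1%:M (codeword n j) y 0 =
  (sqrtC 2)^-1 * ((j == a)%:R + (j == b)%:R).
Proof.
have lt_b := ltn_trans half_exp2S_pred_lt half_exp2S_lt.
have [ones_a ones_b] := complement_half_exp2S.
move=> lt_j; rewrite final_state_codeword !inE -!val_eqE /=.
case/orP=> /eqP->; first by rewrite !xor3_zero0 ?half_exp2S_lt.
by rewrite !xor3_zero_ones ?half_exp2S_lt // ones_a ones_b addrC.
Qed.

Lemma prob_extreme_outcomes j (e : bstr n) : (j < 2 ^ n)%N ->
  bprec e (codeword n (2 ^ n).-1) ->
  prob_in 1%:M (bxor (codeword n j) e) (extreme_outcomes n) =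
  ((j == a)%:R + (j == b)%:R) ^+ 2.
Proof.
move=> lt_j e_le; rewrite /prob_in final_state_bxor_error //.
rewrite (eq_bigr (fun=> ((j == a)%:R + (j == b)%:R) ^+ 2 / 2)) => [|y y_ext].
  rewrite sumr_const cards2 -val_eqE /=.
  have -> : (0 != (2 ^ n).-1)%N by rewrite expnS; have := expn_gt0 2 m; lia.
  by rewrite mulr2n -splitr.
rewrite final_state_codeword_extreme // normrM normfV -natrD normr_nat.
by rewrite ger0_norm ?sqrtC_ge0 ?ler0n // exprMn exprVn sqrtCK mulrC.
Qed.

End OneQueryAlgorithm.

Theorem claim1 (n : nat) (hn : (2 <= n)%N) :
  exists (V : 'M[algC]_(2 ^ n)) (S : {set 'I_(2 ^ n)}),
    unitary V /\
    forall z : bstr n,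
      (inA z -> prob_in V z S = 1) /\ (inB z -> prob_in V z S = 0).
Proof.
case: n hn => [|m] // _.
have lt_ba := half_exp2S_pred_lt m.
have lt_b := ltn_trans lt_ba (half_exp2S_lt m).
exists 1%:M, (extreme_outcomes m.+1); split=> [|z]; first exact: unitary1.
split.
- case/existsP=> e /and3P[e_le _ /eqP->].
  by rewrite prob_extreme_outcomes // eqxx (ltn_eqF lt_ba) add0r expr1n.
- case/existsP=> k /existsP[e /and3P[e_le _ /eqP->]].
  have lt_kb : (k < (2 ^ m.+1 %/ 2).-1)%N := ltn_ord k.
  have lt_ka := ltn_trans lt_kb lt_ba.
  rewrite prob_extreme_outcomes ?(ltn_trans lt_kb lt_b) //.
  by rewrite (ltn_eqF lt_kb) (ltn_eqF lt_ka) addr0 expr0n.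
Qed.
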